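(* Let $\mathcal X$ be finite with $N=|\mathcal X|\ge2$, $c\in(0,1/N]$ and $0\le\varepsilon\le-\log c$. Then $$\Gamma_{\max}(\varepsilon,c)\le(1-Nc)e^\varepsilon+1\quad\text{and}\quad\Gamma_{\min}(\varepsilon,c)\ge\big((1-Nc)e^\varepsilon+1\big)^{-1}.$$
   Context: A kernel $K$ is a row-stochastic matrix with entries $K_{Y|X=x}(y)$, $(K\circ P_X)(y)=\sum_xK_{Y|X=x}(y)P_X(x)$. PML: $\ell_{K\times P_X}(X\to y)=\log\frac{\max_x K_{Y|X=x}(y)}{(K\circ P_X)(y)}$ for full-support $P_X$ and $(K\circ P_X)(y)>0$. $\mathcal Q_{\mathcal X}(c)=\{P_X:\min_xP_X(x)\ge c\}$; $C(K,\mathcal P)=\sup_{P_X\in\mathcal P}\sup_{y:(K\circ P_X)(y)>0}\ell_{K\times P_X}(X\to y)$; $\mathcal M(\varepsilon,c)$ is the set of kernels from $\mathcal X$ to a finite output set with $C(K,\mathcal Q_{\mathcal X}(c))\le\varepsilon$. Define $\Gamma_{\max}(\varepsilon,c)=\sup_{P_X,Q_X\in\mathcal Q_{\mathcal X}(c)}\sup_{K\in\mathcal M(\varepsilon,c)}\sup_{y}\frac{(K\circ P_X)(y)}{(K\circ Q_X)(y)}$ and $\Gamma_{\min}(\varepsilon,c)=\inf_{P_X,Q_X\in\mathcal Q_{\mathcal X}(c)}\inf_{K\in\mathcal M(\varepsilon,c)}\inf_{y}\frac{(K\circ P_X)(y)}{(K\circ Q_X)(y)}$, where $y$ ranges over outputs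 with $K_{Y|X=x}(y)>0$ for some $x$. *)

From HB Require Import structures.
From mathcomp Require Import all_boot all_order all_algebra.
From mathcomp Require Import all_classical all_reals all_analysis.
Set Implicit Arguments. Unset Strict Implicit. Unset Printing Implicit Defensive.
Import Order.TTheory GRing.Theory Num.Theory.
Local Open Scope ring_scope.
Local Open Scope classical_set_scope.

Section PML.
Variable R : realType.

(* A kernel from X to Y: row-stochastic matrix, K x y = K_{Y|X=x}(y). *)
Definition is_kernel (X Y : finType) (K : X -> Y -> R) : Prop :=
  (forall x y, 0 <= K x y) /\ (forall x, \sum_(y : Y) K x y = 1).

Definition is_dist (X : finType) (P : X -> R) : Prop :=
  (forall x, 0 <= P x) /\ \sum_(x : X) P x = 1.

Definition inQ (X : finType) (c : R) (P : X -> R) : Prop :=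
  is_dist P /\ (forall x, c <= P x).

Definition push (X Y : finType) (K : X -> Y -> R) (P : X -> R) (y : Y) : R :=
  \sum_(x : X) K x y * P x.

Definition pml (X Y : finType) (K : X -> Y -> R) (P : X -> R) (y : Y) : R :=
  ln ((\big[Num.max/0]_(x : X) K x y) / push K P y).

Definition Ccap (X Y : finType) (K : X -> Y -> R) (c : R) : \bar R :=
  ereal_sup [set r : \bar R | exists (P : X -> R) (y : Y),
    [/\ inQ c P, 0 < push K P y & r = (pml K P y)%:E]].

Definition inM (X Y : finType) (eps c : R) (K : X -> Y -> R) : Prop :=
  is_kernel K /\ (Ccap K c <= eps%:E)%E.

Definition ratios (X : finType) (eps c : R) : set (\bar R) :=
  [set r | exists (P Q : X -> R) (Y : finType) (K : X -> Y -> R) (y : Y),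
     [/\ inQ c P, inQ c Q, inM eps c K, (exists x, 0 < K x y) &
         r = (push K P y / push K Q y)%:E]].

Definition GammaMax (X : finType) (eps c : R) : \bar R := ereal_sup (ratios X eps c).
Definition GammaMin (X : finType) (eps c : R) : \bar R := ereal_inf (ratios X eps c).

End PML.

From HB Require Import structures.
From mathcomp Require Import all_boot all_order all_algebra.
From mathcomp Require Import all_classical all_reals all_analysis.
From mathcomp Require Import lra.
Import Order.TTheory GRing.Theory Num.Theory.
Local Open Scope ring_scope.

(* Writing P x = c + (P x - c), where the excesses P x - c are nonnegative and
   sum to 1 - N c, gives c S <= (K o P)(y) <= c S + (1 - N c) m, with S the
   column sum and m the column maximum of K at y. The leakage constraint gives
   m <= e^eps (K o Q)(y), so (K o P)(y) <= ((1 - N c) e^eps + 1) (K o Q)(y);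
   exchanging P and Q gives the lower bound. *)

Lemma card_mul_le1 (R : realType) (X : finType) (c : R) :
  c <= 1 / #|X|%:R -> #|X|%:R * c <= 1.
Proof.
move=> cN; have [->|N0] := eqVneq #|X| 0%N; first by rewrite mul0r ler01.
have Npos : 0 < #|X|%:R :> R by rewrite ltr0n lt0n.
by rewrite -ler_pdivlMl // mulr1 -div1r.
Qed.

Section Pushforward.
Context {R : realType} {X Y : finType} {K : X -> Y -> R} {c : R}.
Hypothesis kernelK : is_kernel K.

Lemma push_excessE (P : X -> R) (y : Y) :
  push K P y = c * (\sum_x K x y) + \sum_x K x y * (P x - c).
Proof.
rewrite /push mulr_sumr -big_split /=; apply: eq_bigr => x _.
by rewrite mulrBr (mulrC c) addrC subrK.
Qed.

Lemma push_ge_mass {P : X -> R} (y : Y) :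
  inQ c P -> c * (\sum_x K x y) <= push K P y.
Proof.
move=> [_ Pc]; rewrite push_excessE lerDl.
by apply: sumr_ge0 => x _; rewrite mulr_ge0 ?subr_ge0 //; case: kernelK.
Qed.

Lemma push_le_mass_max {P : X -> R} (y : Y) :
  inQ c P ->
  push K P y <= c * (\sum_x K x y) + (1 - #|X|%:R * c) * \big[Num.max/0]_x K x y.
Proof.
move=> [[_ P1] Pc]; rewrite push_excessE lerD2l.
have -> : 1 - #|X|%:R * c = \sum_x (P x - c).
  by rewrite sumrB P1 sumr_const mulr_natl.
rewrite mulr_suml; apply: ler_sum => x _.
by rewrite mulrC ler_wpM2l ?subr_ge0 ?le_bigmax.
Qed.

Lemma push_gt0 {P : X -> R} {y : Y} :
  0 < c -> inQ c P -> (exists x, 0 < K x y) -> 0 < push K P y.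
Proof.
move=> c_gt0 QP [x0 Kx0]; apply: lt_le_trans (push_ge_mass y QP).
rewrite mulr_gt0 // (bigD1 x0) //= ltr_wpDr //.
by apply: sumr_ge0 => x _; case: kernelK.
Qed.

Lemma pml_le_Ccap {P : X -> R} {y : Y} :
  inQ c P -> 0 < push K P y -> ((pml K P y)%:E <= Ccap K c)%E.
Proof. by move=> QP pushP_gt0; apply: ereal_sup_ubound; exists P, y. Qed.

Lemma bigmax_le_expR_push {eps : R} {Q : X -> R} {y : Y} :
  (Ccap K c <= eps%:E)%E -> inQ c Q -> (exists x, 0 < K x y) -> 0 < c ->
  \big[Num.max/0]_x K x y <= expR eps * push K Q y.
Proof.
move=> Ceps QQ [x0 Kx0] c_gt0.
have pushQ_gt0 := push_gt0 c_gt0 QQ (ex_intro _ x0 Kx0).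
have max_gt0 : 0 < \big[Num.max/0]_x K x y by apply: lt_le_trans Kx0 (le_bigmax _ _ _).
have pml_le : pml K Q y <= eps.
  by rewrite -lee_fin; apply: le_trans (pml_le_Ccap QQ pushQ_gt0) Ceps.
rewrite -ler_pdivrMr // -[m in m <= _]lnK ?ler_expR //.
by rewrite posrE divr_gt0.
Qed.

Lemma push_le_bound_push {eps : R} {P Q : X -> R} {y : Y} :
  0 < c -> c <= 1 / #|X|%:R ->
  inQ c P -> inQ c Q -> (Ccap K c <= eps%:E)%E -> (exists x, 0 < K x y) ->
  push K P y <= ((1 - #|X|%:R * c) * expR eps + 1) * push K Q y.
Proof.
move=> c_gt0 cN QP QQ Ceps Kpos.
have excess_ge0 : 0 <= 1 - #|X|%:R * c by rewrite subr_ge0 card_mul_le1.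
have maxQ := bigmax_le_expR_push Ceps QQ Kpos c_gt0.
have := ler_wpM2l excess_ge0 maxQ.
have := push_le_mass_max y QP; have := push_ge_mass y QQ.
nra.
Qed.

End Pushforward.

Theorem proposition2 (R : realType) (X : finType) (c eps : R) :
  (2 <= #|X|)%N -> 0 < c -> c <= 1 / #|X|%:R ->
  0 <= eps -> eps <= - ln c ->
  (GammaMax X eps c <= ((1 - #|X|%:R * c) * expR eps + 1)%:E)%E /\
  (((1 - #|X|%:R * c) * expR eps + 1)^-1%:E <= GammaMin X eps c)%E.
Proof.
move=> _ c_gt0 cN _ _.
have bound_gt0 : 0 < (1 - #|X|%:R * c) * expR eps + 1.
  by rewrite ltr_wpDl // mulr_ge0 ?expR_ge0 // subr_ge0 card_mul_le1.
split.
  apply: ge_ereal_sup => _ [P [Q [Y [K [y [QP QQ [HK Ceps] Kpos ->]]]]]].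
  have pushQ_gt0 := push_gt0 HK c_gt0 QQ Kpos.
  by rewrite lee_fin ler_pdivrMr // (push_le_bound_push HK).
apply: le_ereal_inf_tmp => _ [P [Q [Y [K [y [QP QQ [HK Ceps] Kpos ->]]]]]].
have pushQ_gt0 := push_gt0 HK c_gt0 QQ Kpos.
rewrite lee_fin ler_pdivlMr // mulrC ler_pdivrMr // mulrC.
exact: push_le_bound_push.
Qed.
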